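(* Let $M$ be a real $m\times n$ matrix and let $\Lambda_1\geq\dotsb\geq\Lambda_n\geq 0$ be its singular values, i.e. $\Lambda_1^2\geq\dotsb\geq\Lambda_n^2$ are the eigenvalues of $M^TM$. (If $M$ is symmetric, the $\Lambda_i$ are the absolute values of its eigenvalues.) Let $k\leq\min(m,n)$ be a positive integer and let $\vec{\Delta}^{(k)}$ be the vector of all $k\times k$ minors of $M$, arranged in some order. Then, with all implied constants depending only on $m$ and $n$: (i) $\|\vec{\Delta}^{(k)}\|\asymp\Lambda_1\cdots\Lambda_k$, i.e. there are constants $a,A>0$ depending only on $m,n$ with $a\Lambda_1\cdots\Lambda_k\leq\|\vec{\Delta}^{(k)}\|\leq A\Lambda_1\cdots\Lambda_k$. (ii) There is a $k$-dimensional linear subspace $V\subset\mathbb{R}^n$, spanned by $k$ standard basis vectors of $\mathbb{R}^n$, such that $\|M\vec{v}\|\geq a'\|\vec{v}\|\Lambda_k$ for all $\vec{v}\in V$, where $a'>0$ depends only on $m,n$. (iii) There is a constant $a''>0$ depending only on $m,n$ such that for every $C\geq 1$, either there is an $(n-k+1)$-dimensional linear subspace $X\subset\mathbb{R}^n$ with $\|M\vec{X}\|\leq C^{-1}\|\vec{X}\|$ for all $\vec{X}\in X$, or there is a $k$-dimensional linear subspace $V\subset\mathbb{R}^n$, spanned by standard basis vectors of $\mathbb{R}^n$, with $\|M\vec{v}\|\geq a''C^{-1}\|\vec{v}\|$ for all $\vec{v}\in V$.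
   Context: $\|\cdot\|$ denotes the supremum (maximum absolute value of coordinates) norm. *)

From mathcomp Require Import all_boot all_order all_algebra.
From mathcomp Require Import reals.
Set Implicit Arguments. Unset Strict Implicit. Unset Printing Implicit Defensive.
Import Order.TTheory GRing.Theory Num.Theory.
Local Open Scope ring_scope.

Definition mxsupn {R : realType} {p q : nat} (A : 'M[R]_(p, q)) : R :=
  \big[Num.max/0]_(i < p) \big[Num.max/0]_(j < q) `|A i j|.

Definition incr_sel {k p : nat} (f : {ffun 'I_k -> 'I_p}) : bool :=
  [forall i : 'I_k, forall j : 'I_k, (i < j)%N ==> (f i < f j)%N].

(* Sup norm of the vector of all k x k minors of M: the max over all choices of
   k rows (increasing) and k columns (increasing) of |det of the submatrix|. *)
Definition minors_supn {R : realType} {m n : nat} (k : nat) (M : 'M[R]_(m, n)) : R :=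
  \big[Num.max/0]_(f : {ffun 'I_k -> 'I_m} | incr_sel f)
   \big[Num.max/0]_(g : {ffun 'I_k -> 'I_n} | incr_sel g)
     `|\det (mxsub f g M)|.

(* Lam 0 >= Lam 1 >= ... >= Lam (n-1) >= 0 are the singular values of M:
   their squares are the eigenvalues (with multiplicity) of M^T M. *)
Definition singular_values {R : realType} {m n : nat} (M : 'M[R]_(m, n))
  (Lam : nat -> R) : Prop :=
  [/\ forall i j, (i <= j < n)%N -> Lam j <= Lam i,
      forall i, (i < n)%N -> 0 <= Lam i &
      char_poly (M^T *m M) = \prod_(i < n) ('X - (Lam i ^+ 2)%:P)].

(* Write D_k for the largest k x k minor of M and L_k for Lam_1 ... Lam_k.
   (i) The sum of the k x k principal minors of M^T M is the elementary
   symmetric function e_k(Lam_1^2, ..., Lam_n^2), and by Cauchy-Binet each of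
   these principal minors, times k!, is a sum of squares of k x k minors of M.
   Comparing sums of at most 2^n m^k nonnegative terms with their largest term
   gives L_k << D_k << L_k, hence also D_(k+1) << Lam_(k+1) D_k << D_(k+1).
   (ii) If N is a maximal k x k minor, a vector v supported on its columns is
   recovered from the matching entries of M v through the adjugate of N, whose
   entries are (k-1)-minors: |v| << D_(k-1) / D_k |M v| << |M v| / Lam_k.
   (iii) If Lam_k is not too small use (ii). Otherwise let j be the first index
   with Lam_(j+1) small and take a maximal j x j minor on rows f. On the space of
   v with (M v)_f = 0, of dimension at least n - j >= n - k + 1, expanding the
   (j+1)-minors bordered by one more row r gives
   |(M v)_r| D_j <= n |v| D_(j+1) << |v| Lam_(j+1) D_j, which is small. *)

From mathcomp Require Import all_boot all_order all_algebra all_fingroup.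
From mathcomp Require Import reals.
From mathcomp Require Import zify ring.
Import Order.TTheory GRing.Theory Num.Theory.
Local Open Scope ring_scope.
Set Implicit Arguments. Unset Strict Implicit. Unset Printing Implicit Defensive.

Section Ordered.
Variable R : realDomainType.

Lemma le_of_sqr_le_mul (x y K : R) : 0 <= x -> 0 <= y -> 1 <= K ->
  x ^+ 2 <= K * y ^+ 2 -> x <= K * y.
Proof.
move=> x0 y0 K1 xy; have K0 : 0 <= K by apply: le_trans K1.
rewrite -(@ler_sqr _ x (K * y)) ?nnegrE ?mulr_ge0 //.
apply: le_trans xy _; rewrite exprMn ler_wpM2r ?sqr_ge0 // expr2.
by rewrite ler_peMl.
Qed.

Lemma sumr_pred_le (I : finType) (P : pred I) (F : I -> R) :
  (forall i, 0 <= F i) -> \sum_(i | P i) F i <= \sum_i F i.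
Proof. by move=> F0; rewrite [X in _ <= X](bigID P) /= lerDl sumr_ge0. Qed.

Lemma ler_term_sum (I : finType) (P : pred I) (F : I -> R) j :
  (forall i, P i -> 0 <= F i) -> P j -> F j <= \sum_(i | P i) F i.
Proof.
move=> F0 Pj; rewrite (bigD1 j) //= lerDl sumr_ge0 // => i /andP [Pi _].
exact: F0.
Qed.

Lemma card_set_ltn n k : (k <= n)%N -> #|[set i : 'I_n | (i < k)%N]| = k.
Proof.
move=> kn; have w_inj : injective (widen_ord kn) by move=> x y /(congr1 val) /= /val_inj.
rewrite -[in RHS](card_ord k) -(card_imset _ w_inj).
apply: eq_card => i; rewrite inE; apply/idP/imsetP => [ik|[j _ ->]] //=.
by exists (Ordinal ik) => //; apply: val_inj.
Qed.

Lemma prod_set_le_prefix n (c : nat -> R) (T : {set 'I_n}) :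
  (forall i, 0 <= c i) -> (forall i j, (i <= j < n)%N -> c j <= c i) ->
  \prod_(i in T) c i <= \prod_(i < #|T|) c i.
Proof.
move=> c0 c_noninc; set k := #|T|.
have kn : (k <= n)%N by rewrite -[X in (_ <= X)%N]card_ord max_card.
set T0 := [set i : 'I_n | (i < k)%N].
have -> : \prod_(i < k) c i = \prod_(i in T0) c i.
  by rewrite (big_ord_widen n c kn); apply: eq_bigl => i; rewrite inE.
rewrite (big_setID T0) [X in _ <= X](big_setID T) /= setIC.
apply: ler_wpM2l; first exact: prodr_ge0.
have card_D : #|T :\: T0| = #|T0 :\: T|.
  apply/eqP; rewrite -(eqn_add2l #|T :&: T0|) cardsID [in X in _ == X]setIC cardsID.
  by rewrite card_set_ltn.
(* The two differences have the same size, and the factors of [T :\: T0] are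
   at most [c k.-1], which is at most each factor of [T0 :\: T]. *)
apply: (@le_trans _ _ (c k.-1 ^+ #|T :\: T0|)).
  rewrite -prodr_const; apply: ler_prod => i; rewrite !inE => /andP [ni _].
  by rewrite c0 c_noninc // ltn_ord andbT; rewrite -ltnNge in ni; lia.
rewrite card_D -prodr_const; apply: ler_prod => i; rewrite !inE => /andP [_ ik].
by rewrite c0 c_noninc //; lia.
Qed.

End Ordered.

Lemma set_enum_inj n (T : {set 'I_n}) :
  exists g : 'I_#|T| -> 'I_n, injective g /\ T = g @: [set: 'I_#|T|].
Proof.
exists enum_val; split; first exact: enum_val_inj.
apply/setP => x; apply/idP/imsetP => [xT|[j _ ->]]; last exact: enum_valP.
by exists (enum_rank_in xT x); rewrite ?enum_rankK_in.
Qed.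

Lemma submx_of_rank (F : fieldType) p n (K : 'M[F]_(p, n)) r : (r <= \rank K)%N ->
  exists X : 'M[F]_n, \rank X = r /\ (X <= K)%MS.
Proof.
move=> rK; exists ((pid_mx r : 'M_(n, \rank K)) *m row_base K); split.
  rewrite (mxrankMfree _ (row_base_free K)) rank_pid_mx //.
  exact: leq_trans rK (rank_leq_col K).
by rewrite (submx_trans (submxMl _ _)) // eq_row_base.
Qed.

Section SupNorm.
Variable R : realType.

Lemma bigmax0_attained (I : finType) (P : pred I) (F : I -> R) :
  \big[Num.max/0]_(i | P i) F i = 0 \/
  exists2 i, P i & \big[Num.max/0]_(i | P i) F i = F i.
Proof.
apply: (big_ind (fun y => y = 0 \/ exists2 i, P i & y = F i)); first by left.
  by move=> x y hx hy; case: leP.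
by move=> i Pi; right; exists i.
Qed.

Lemma mxsupn_ge0 p q (A : 'M[R]_(p, q)) : 0 <= mxsupn A.
Proof. by rewrite /mxsupn bigmax_idl le_max lexx. Qed.

Lemma normr_le_mxsupn p q (A : 'M[R]_(p, q)) i j : `|A i j| <= mxsupn A.
Proof. by apply: le_trans (le_bigmax _ _ i); exact: (le_bigmax _ (fun j => `|A i j|)). Qed.

Lemma mxsupn_le p q (A : 'M[R]_(p, q)) c :
  0 <= c -> (forall i j, `|A i j| <= c) -> mxsupn A <= c.
Proof. by move=> c0 Ac; apply: bigmax_le => // i _; apply: bigmax_le. Qed.

Lemma mxsupn_attained p q (A : 'M[R]_(p, q)) :
  mxsupn A = 0 \/ exists i j, mxsupn A = `|A i j|.
Proof.
rewrite /mxsupn.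
have [-> | [i _ ->]] := bigmax0_attained predT (fun i => \big[Num.max/0]_(j < q) `|A i j|).
  by left.
have [-> | [j _ ->]] := bigmax0_attained predT (fun j => `|A i j|); first by left.
by right; exists i, j.
Qed.

End SupNorm.

Lemma incr_sel_inj k p (f : {ffun 'I_k -> 'I_p}) : incr_sel f -> injective f.
Proof.
move=> /forallP f_incr x y fxy; apply/val_inj.
case: (ltngtP x y) => // [xy|yx].
- by move: (f_incr x) => /forallP /(_ y) /implyP /(_ xy); rewrite fxy ltnn.
- by move: (f_incr y) => /forallP /(_ x) /implyP /(_ yx); rewrite fxy ltnn.
Qed.

Lemma inj_incr_sel_perm k p (h : 'I_k -> 'I_p) : injective h ->
  exists (f : {ffun 'I_k -> 'I_p}) (s : 'S_k), incr_sel f /\ forall i, h i = f (s i).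
Proof.
move=> h_inj.
pose rk x := #|[set y | (h y < h x)%N]|.
have rk_lt x : (rk x < k)%N.
  rewrite -[X in (_ < X)%N]card_ord; apply/proper_card/properP; split.
    exact/subsetP.
  by exists x => //; rewrite inE ltnn.
have rk_mono x y : (h x < h y)%N -> (rk x < rk y)%N.
  move=> hxy; apply/proper_card/properP; split.
    by apply/subsetP => z; rewrite !inE => /ltn_trans; apply.
  by exists x; rewrite !inE ?ltnn.
pose r x : 'I_k := Ordinal (rk_lt x).
have r_inj : injective r.
  move=> x y /(congr1 val) /= rkxy; apply/h_inj/val_inj.
  by case: (ltngtP (h x) (h y)) => // /rk_mono; rewrite rkxy ltnn.
pose s := perm r_inj.
exists [ffun i => h (s^-1 i)%g], s; split; last by move=> i; rewrite ffunE permK.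
apply/forallP => i; apply/forallP => j; apply/implyP => ij; rewrite !ffunE.
have rkV x : rk (s^-1 x)%g = x by rewrite -[RHS](congr1 val (permKV s x)) /s permE.
case: ltngtP => // [/rk_mono|/val_inj/h_inj/(congr1 s)].
  by rewrite !rkV => /(ltn_trans ij); rewrite ltnn.
by rewrite !permKV => ji; rewrite ji ltnn in ij.
Qed.

Section DetPerm.
Variable R : comNzRingType.

Lemma det_row_perm k (s : 'S_k) (A : 'M[R]_k) :
  \det (row_perm s A) = (-1) ^+ s * \det A.
Proof. by rewrite row_permE det_mulmx det_perm. Qed.

Lemma det_col_perm k (s : 'S_k) (A : 'M[R]_k) :
  \det (col_perm s A) = (-1) ^+ s * \det A.
Proof. by rewrite col_permE det_mulmx det_perm odd_permV mulrC. Qed.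

Lemma det_mxsub_bij p n (pi : 'I_p -> 'I_n) (A : 'M[R]_n) :
  p = n -> injective pi -> \det (mxsub pi pi A) = \det A.
Proof.
move=> pn; subst p => pi_inj.
have -> : mxsub pi pi A = col_perm (perm pi_inj) (row_perm (perm pi_inj) A).
  by apply/matrixP => i j; rewrite !mxE !permE.
by rewrite det_col_perm det_row_perm mulrA -expr2 sqrr_sign mul1r.
Qed.

End DetPerm.

Section Minors.
Variables (R : realType) (m n : nat) (M : 'M[R]_(m, n)).

Lemma minors_supn_ge0 k : 0 <= minors_supn k M.
Proof. by rewrite /minors_supn bigmax_idl le_max lexx. Qed.

Lemma normr_det_le_minors_supn k (f : {ffun 'I_k -> 'I_m}) (g : {ffun 'I_k -> 'I_n}) :
  incr_sel f -> incr_sel g -> `|\det (mxsub f g M)| <= minors_supn k M.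
Proof. by move=> f_incr g_incr; apply: (bigmax_sup f) => //; apply: (bigmax_sup g). Qed.

Lemma minors_supn_le k c : 0 <= c ->
  (forall (f : {ffun 'I_k -> 'I_m}) (g : {ffun 'I_k -> 'I_n}),
     incr_sel f -> incr_sel g -> `|\det (mxsub f g M)| <= c) ->
  minors_supn k M <= c.
Proof.
by move=> c0 Mc; apply: bigmax_le => // f f_incr; apply: bigmax_le => // g; apply: Mc.
Qed.

Lemma minors_supn_attained k : 0 < minors_supn k M ->
  exists (f : {ffun 'I_k -> 'I_m}) (g : {ffun 'I_k -> 'I_n}),
    [/\ incr_sel f, incr_sel g & minors_supn k M = `|\det (mxsub f g M)|].
Proof.
rewrite /minors_supn.
have [-> | [f f_incr ->]] := bigmax0_attained (@incr_sel k m)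
  (fun f => \big[Num.max/0]_(g | incr_sel g) `|\det (mxsub f g M)|).
  by rewrite ltxx.
have [-> | [g g_incr ->]] := bigmax0_attained (@incr_sel k n)
  (fun g => `|\det (mxsub f g M)|); first by rewrite ltxx.
by exists f, g.
Qed.

Lemma normr_det_mxsub_le k (h : 'I_k -> 'I_m) (g : 'I_k -> 'I_n) :
  `|\det (mxsub h g M)| <= minors_supn k M.
Proof.
have [/injectiveP h_inj | /injectivePn [i1 [i2 ne12 e12]]] := boolP (injectiveb h);
  last first.
  rewrite (determinant_alternate ne12) ?normr0 ?minors_supn_ge0 // => j.
  by rewrite !mxE e12.
have [/injectiveP g_inj | /injectivePn [i1 [i2 ne12 e12]]] := boolP (injectiveb g);
  last first.
  rewrite -det_tr (determinant_alternate ne12) ?normr0 ?minors_supn_ge0 // => j.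
  by rewrite !mxE e12.
have [f [s [f_incr hfs]]] := inj_incr_sel_perm h_inj.
have [f' [s' [f'_incr gfs]]] := inj_incr_sel_perm g_inj.
have -> : mxsub h g M = col_perm s' (row_perm s (mxsub f f' M)).
  by apply/matrixP => i j; rewrite !mxE hfs gfs.
by rewrite det_col_perm det_row_perm !normrMsign normr_det_le_minors_supn.
Qed.

End Minors.

Section CauchyBinet.
Variable R : comNzRingType.

Lemma det_mulmx_rowsub k p (A : 'M[R]_(k, p)) (B : 'M[R]_(p, k)) :
  \det (A *m B) =
  \sum_(h : {ffun 'I_k -> 'I_p}) (\prod_i A i (h i)) * \det (rowsub h B).
Proof.
rewrite [LHS]/determinant.
transitivity (\sum_(s : 'S_k) \sum_(h : {ffun 'I_k -> 'I_p})
   (-1) ^+ s * ((\prod_i A i (h i)) * \prod_i B (h i) (s i))).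
  apply: eq_bigr => s _; rewrite -big_distrr /=; congr (_ * _).
  under eq_bigr do rewrite mxE.
  by rewrite bigA_distr_bigA /=; apply: eq_bigr => h _; rewrite big_split.
rewrite exchange_big /=; apply: eq_bigr => h _.
rewrite [in RHS]/determinant big_distrr /=; apply: eq_bigr => s _.
by rewrite mulrCA; congr (_ * (_ * _)); apply: eq_bigr => i _; rewrite mxE.
Qed.

(* Averaging [det_mulmx_rowsub] over the k! reindexings h |-> h \o t^-1 turns
   the coefficient of det (rowsub h B) into det (colsub h A). *)
Lemma cauchy_binet k p (A : 'M[R]_(k, p)) (B : 'M[R]_(p, k)) :
  k`!%:R * \det (A *m B) =
  \sum_(h : {ffun 'I_k -> 'I_p}) \det (colsub h A) * \det (rowsub h B).
Proof.
transitivity (\sum_(t : 'S_k) \sum_(h : {ffun 'I_k -> 'I_p})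
   (-1) ^+ t * (\prod_i A i (h (t i))) * \det (rowsub h B)).
  rewrite mulr_natl -card_Sn -sumr_const; apply: eq_bigr => t _.
  rewrite (reindex_inj (h := fun h' : {ffun 'I_k -> 'I_p} => [ffun j => h' (t^-1 j)%g]));
    last first.
    move=> h1 h2 /ffunP h12; apply/ffunP => j.
    by move: (h12 (t j)); rewrite !ffunE permK.
  rewrite det_mulmx_rowsub; apply: eq_bigr => h _.
  have -> : rowsub [ffun j => h (t^-1 j)%g] B = row_perm (t^-1)%g (rowsub h B).
    by apply/matrixP => i j; rewrite !mxE ffunE.
  rewrite det_row_perm odd_permV.
  under [in RHS]eq_bigr => i _ do rewrite ffunE permK.
  by rewrite mulrACA -expr2 sqrr_sign mul1r.
rewrite exchange_big; apply: eq_bigr => h _; rewrite [in RHS]/determinant big_distrl /=.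
by apply: eq_bigr => t _; congr (_ * _ * _); apply: eq_bigr => i _; rewrite mxE.
Qed.

Lemma det_gram k p (N : 'M[R]_(p, k)) :
  k`!%:R * \det (N^T *m N) = \sum_(h : {ffun 'I_k -> 'I_p}) \det (rowsub h N) ^+ 2.
Proof.
rewrite cauchy_binet; apply: eq_bigr => h _; rewrite expr2 -det_tr.
by congr (\det _ * _); apply/matrixP => i j; rewrite !mxE.
Qed.

End CauchyBinet.

Section PrincipalMinors.
Variable R : comNzRingType.

(* The principal submatrix on [T], padded with rows of the identity so that
   no enumeration of [T] is needed. *)
Definition principal_mx n (T : {set 'I_n}) (B : 'M[R]_n) : 'M[R]_n :=
  \matrix_(i, j) if i \in T then B i j else (i == j)%:R.

Lemma prod_if_polyC_X n (J : {set 'I_n}) (b : 'I_n -> R) (d : 'I_n -> bool) :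
  \prod_i (if i \in J then - (b i)%:P else 'X *+ d i) =
  ((-1) ^+ #|J| * \prod_i (if i \in J then b i else (d i)%:R))%:P * 'X^(n - #|J|).
Proof.
rewrite (bigID (mem J)) /= [in RHS](bigID (mem J)) /=.
rewrite (eq_bigr (fun i => - (b i)%:P)); last by move=> i ->.
rewrite [X in _ * X](eq_bigr (fun i => ((d i)%:R)%:P * 'X)); last first.
  by move=> i /negbTE ->; case: (d i); rewrite ?polyC1 ?polyC0 ?mul1r ?mul0r.
rewrite [X in _ = (_ * (X * _))%:P * _](eq_bigr b); last by move=> i ->.
rewrite [X in _ = (_ * (_ * X))%:P * _](eq_bigr (fun i => (d i)%:R)); last first.
  by move=> i /negbTE ->.
rewrite prodrN big_split /= prodr_const.
have -> : #|[pred i | i \notin J]| = (n - #|J|)%N.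
  have -> : #|[pred i | i \notin J]| = #|~: J| by apply: eq_card => i; rewrite !inE.
  by have := cardsC J; rewrite card_ord; lia.
rewrite !polyCM !rmorph_prod rmorph_sign /=.
by rewrite -!mulrA; congr (_ * _); rewrite mulrA.
Qed.

Lemma char_poly_principal n (B : 'M[R]_n) :
  char_poly B =
  \sum_(T : {set 'I_n}) ((-1) ^+ #|T| * \det (principal_mx T B))%:P * 'X^(n - #|T|).
Proof.
rewrite /char_poly /determinant.
transitivity (\sum_(s : 'S_n) \sum_(T : {set 'I_n})
   ((-1) ^+ s * ((-1) ^+ #|T| *
      \prod_i (if i \in T then B i (s i) else (i == s i)%:R)))%:P * 'X^(n - #|T|)).
  apply: eq_bigr => s _.
  rewrite (eq_bigr (fun i => - (B i (s i))%:P + 'X *+ (i == s i))); last first.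
    by move=> i _; rewrite !mxE addrC.
  rewrite bigA_distr big_distrr /=; apply: eq_bigr => T _.
  rewrite prod_if_polyC_X [in RHS]polyCM !mulrA; congr (_ * _ * _).
  by rewrite rmorphXn rmorphN1.
rewrite exchange_big /=; apply: eq_bigr => T _.
rewrite -big_distrl /= -rmorph_sum /=; congr (_%:P * _).
rewrite big_distrr /=; apply: eq_bigr => s _.
by rewrite mulrCA; congr (_ * (_ * _)); apply: eq_bigr => i _; rewrite mxE.
Qed.

Lemma prod_XsubC_subsets n (c : 'I_n -> R) :
  \prod_i ('X - (c i)%:P) =
  \sum_(T : {set 'I_n}) ((-1) ^+ #|T| * \prod_(i in T) c i)%:P * 'X^(n - #|T|).
Proof.
rewrite (eq_bigr (fun i => - (c i)%:P + 'X *+ true)); last by move=> i _; rewrite addrC.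
rewrite bigA_distr; apply: eq_bigr => T _; rewrite prod_if_polyC_X.
by congr ((_ * _)%:P * _); rewrite [RHS]big_mkcond; apply: eq_bigr => i _; case: ifP.
Qed.

Lemma coef_sum_subsets n k (w : {set 'I_n} -> R) : (k <= n)%N ->
  (\sum_(T : {set 'I_n}) (w T)%:P * 'X^(n - #|T|))`_(n - k) =
  \sum_(T : {set 'I_n} | #|T| == k) w T.
Proof.
move=> kn; rewrite coef_sum [RHS]big_mkcond /=; apply: eq_bigr => T _.
rewrite coefCM coefXn.
have Tn : (#|T| <= n)%N by rewrite -[X in (_ <= X)%N]card_ord max_card.
have -> : (n - k == n - #|T|)%N = (#|T| == k) by apply/eqP/eqP => [|->] //; lia.
by case: eqP => _; rewrite ?mulr1 ?mulr0.
Qed.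

Lemma sum_principal_minors n k (B : 'M[R]_n) (c : 'I_n -> R) : (k <= n)%N ->
  char_poly B = \prod_i ('X - (c i)%:P) ->
  \sum_(T : {set 'I_n} | #|T| == k) \det (principal_mx T B) =
  \sum_(T : {set 'I_n} | #|T| == k) \prod_(i in T) c i.
Proof.
move=> kn /(congr1 (fun p : {poly R} => p`_(n - k))).
rewrite /= char_poly_principal prod_XsubC_subsets !coef_sum_subsets //.
have signk (F : {set 'I_n} -> R) :
    \sum_(T : {set 'I_n} | #|T| == k) (-1) ^+ #|T| * F T =
    (-1) ^+ k * \sum_(T : {set 'I_n} | #|T| == k) F T.
  by rewrite big_distrr; apply: eq_bigr => T /eqP ->.
rewrite !signk => /(congr1 ( *%R ((-1) ^+ k))).
by rewrite !mulrA -expr2 sqrr_sign !mul1r.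
Qed.

Lemma det_principal_mx k n (g : 'I_k -> 'I_n) (B : 'M[R]_n) : injective g ->
  \det (principal_mx (g @: [set: 'I_k]) B) = \det (mxsub g g B).
Proof.
move=> g_inj; set T := g @: [set: 'I_k].
have gT i : g i \in T by rewrite imset_f ?inE.
pose pi (x : 'I_(k + #|~: T|)) : 'I_n :=
  match split x with inl i => g i | inr j => enum_val j end.
have pi_inj : injective pi.
  move=> x y; rewrite /pi -[x]splitK -[y]splitK.
  case: (split x) => [i|i]; case: (split y) => [j|j]; rewrite !unsplitK.
  - by move/g_inj => ->.
  - by move=> gij; have := enum_valP j; rewrite -gij inE gT.
  - by move=> gij; have := enum_valP i; rewrite gij inE gT.
  - by move/enum_val_inj => ->.
have card_kTC : (k + #|~: T|)%N = n.
  by have := cardsC T; rewrite card_ord /T card_imset // cardsT card_ord.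
rewrite -(det_mxsub_bij (principal_mx T B) card_kTC pi_inj).
have -> : mxsub pi pi (principal_mx T B) =
    block_mx (mxsub g g B) (\matrix_(i, j) B (g i) (enum_val j)) 0 1%:M.
  have split_l i : split (lshift #|~: T| i) = inl i := unsplitK (inl _ i).
  have split_r j : split (rshift k j) = inr j := unsplitK (inr _ j).
  apply/matrixP => x y; rewrite -[x]splitK -[y]splitK.
  case: (split x) => i; case: (split y) => j;
    rewrite /= ?block_mxEul ?block_mxEur ?block_mxEdl ?block_mxEdr !mxE /pi
      ?split_l ?split_r ?gT //.
  - have := enum_valP i; rewrite inE => /negbTE ->.
    by case: eqP => // gji; have := enum_valP i; rewrite gji inE gT.
  - have := enum_valP i; rewrite inE => /negbTE ->.
    by rewrite (inj_eq enum_val_inj).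
by rewrite (@det_ublock R) det1 mulr1.
Qed.

End PrincipalMinors.

Definition ext_last j p (f : 'I_j -> 'I_p) (x : 'I_p) (i : 'I_j.+1) : 'I_p :=
  if unlift ord_max i is Some i' then f i' else x.

Lemma ext_last_lift j p (f : 'I_j -> 'I_p) x i : ext_last f x (lift ord_max i) = f i.
Proof. by rewrite /ext_last liftK. Qed.

Lemma ext_last_max j p (f : 'I_j -> 'I_p) x : ext_last f x ord_max = x.
Proof. by rewrite /ext_last unlift_none. Qed.

Section MinorEstimates.
Variables (R : realType) (m n : nat) (M : 'M[R]_(m, n)).

(* Expand each bordered minor along its last column: summed against [v], every
   cofactor term but the one of the border row carries a coordinate of [M *m v]
   on the rows [f], which vanish. *)
Lemma det_border_expansion j (f : 'I_j -> 'I_m) (g : 'I_j -> 'I_n) (v : 'cV[R]_n) r :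
  (forall i, (M *m v) (f i) 0 = 0) ->
  \det (mxsub f g M) * (M *m v) r 0 =
  \sum_c v c 0 * \det (mxsub (ext_last f r) (ext_last g c) M).
Proof.
move=> Mv_f0.
pose cof (i : 'I_j.+1) :=
  (-1) ^+ (i + @ord_max j)%N * \det (row' i (mxsub (ext_last f r) g M)).
have expand c : \det (mxsub (ext_last f r) (ext_last g c) M) =
    \sum_i M (ext_last f r i) c * cof i.
  rewrite (expand_det_col _ ord_max); apply: eq_bigr => i _.
  rewrite !mxE ext_last_max /cofactor /cof; congr (_ * (_ * \det _)).
  by apply/matrixP => x y; rewrite !mxE ext_last_lift.
under eq_bigr => c _ do rewrite expand big_distrr /=.
rewrite exchange_big /= (bigD1 ord_max) //= [X in _ + X]big1 ?addr0.
  rewrite /cof -signr_odd addnn odd_double mul1r ext_last_max.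
  have -> : row' ord_max (mxsub (ext_last f r) g M) = mxsub f g M.
    by apply/matrixP => x y; rewrite !mxE ext_last_lift.
  by rewrite mxE big_distrr; apply: eq_bigr => c _ /=; ring.
move=> i /eqP i_max; have [i' ->|//] := unliftP ord_max i.
transitivity (cof (lift ord_max i') * (M *m v) (f i') 0).
  by rewrite mxE big_distrr; apply: eq_bigr => c _ /=; rewrite ext_last_lift; ring.
by rewrite Mv_f0 mulr0.
Qed.

Lemma cramer_bound k (f : 'I_k.+1 -> 'I_m) (g : 'I_k.+1 -> 'I_n) (v : 'cV[R]_n) :
  injective g -> (forall c, c \notin g @: [set: 'I_k.+1] -> v c 0 = 0) ->
  `|\det (mxsub f g M)| * mxsupn v <= k.+1%:R * minors_supn k M * mxsupn (M *m v).
Proof.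
move=> g_inj v_supp.
set N := mxsub f g M; set D := minors_supn k M.
have [->|[c [z ->]]] := mxsupn_attained v.
  by rewrite mulr0 !mulr_ge0 ?minors_supn_ge0 ?mxsupn_ge0.
rewrite (ord1 z).
have [/imsetP [i _ ->] | c_out] := boolP (c \in g @: [set: 'I_k.+1]); last first.
  by rewrite v_supp ?normr0 ?mulr0 // !mulr_ge0 ?minors_supn_ge0 ?mxsupn_ge0.
pose u : 'cV[R]_k.+1 := \col_j v (g j) 0.
pose w : 'cV[R]_k.+1 := \col_j (M *m v) (f j) 0.
have w_Nu : w = N *m u.
  apply/matrixP => x y; rewrite (ord1 y) !mxE.
  rewrite (bigID (mem (g @: [set: 'I_k.+1]))) /= [X in _ + X]big1 ?addr0; last first.
    by move=> c' /v_supp ->; rewrite mulr0.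
  rewrite big_imset /=; last by move=> a b _ _ /g_inj.
  by apply: eq_big => [a|a _]; rewrite ?inE // !mxE.
have adj_w : \adj N *m w = \det N *: u by rewrite w_Nu mulmxA mul_adj_mx mul_scalar_mx.
have := congr1 (fun A : 'M[R]_(k.+1, 1) => A i 0) adj_w; rewrite /= !mxE => adj_wi.
rewrite -normrM -adj_wi; apply: le_trans (ler_norm_sum _ _ _) _.
have -> : k.+1%:R * D * mxsupn (M *m v) = \sum_(j < k.+1) D * mxsupn (M *m v).
  by rewrite sumr_const card_ord -mulrA mulr_natl.
apply: ler_sum => j _; rewrite normrM ler_pM ?normr_ge0 //; last first.
  by rewrite [X in `|X|]mxE normr_le_mxsupn.
rewrite mxE /cofactor normrMsign.
have -> : row' j (col' i N) =
    mxsub (fun x => f (lift j x)) (fun x => g (lift i x)) M.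
  by apply/matrixP => x y; rewrite !mxE.
exact: normr_det_mxsub_le.
Qed.

Lemma principal_minor_gram k (g : 'I_k -> 'I_n) : injective g ->
  k`!%:R * \det (principal_mx (g @: [set: 'I_k]) (M^T *m M)) =
  \sum_(h : {ffun 'I_k -> 'I_m}) \det (mxsub h g M) ^+ 2.
Proof.
move=> g_inj; rewrite det_principal_mx //.
have -> : mxsub g g (M^T *m M) = (colsub g M)^T *m colsub g M.
  by apply/matrixP => i j; rewrite !mxE; apply: eq_bigr => l _; rewrite !mxE.
rewrite det_gram; apply: eq_bigr => h _; congr (\det _ ^+ 2).
by apply/matrixP => i j; rewrite !mxE.
Qed.

Lemma principal_minor_ge0 (T : {set 'I_n}) : 0 <= \det (principal_mx T (M^T *m M)).
Proof.
have [g [g_inj ->]] := set_enum_inj T.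
rewrite -(pmulr_rge0 _ (_ : 0 < #|T|`!%:R)) ?ltr0n ?fact_gt0 // principal_minor_gram //.
by apply: sumr_ge0 => h _; apply: sqr_ge0.
Qed.

End MinorEstimates.

Section Constants.
Variables (R : realType) (m n : nat).

Definition minors_ub : R := (n`! * #|{set 'I_n}|)%:R.
Definition minors_lb : R := (#|{set 'I_n}| * m.+1 ^ n)%:R.
Definition minors_gap : R := minors_lb * minors_ub.

Lemma minors_ub_ge1 : 1 <= minors_ub.
Proof. by rewrite ler1n muln_gt0 fact_gt0; apply/card_gt0P; exists set0. Qed.

Lemma minors_lb_ge1 : 1 <= minors_lb.
Proof. by rewrite ler1n muln_gt0 expn_gt0 andbT; apply/card_gt0P; exists set0. Qed.

Lemma minors_ub_gt0 : 0 < minors_ub.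
Proof. exact: lt_le_trans ltr01 minors_ub_ge1. Qed.

Lemma minors_lb_gt0 : 0 < minors_lb.
Proof. exact: lt_le_trans ltr01 minors_lb_ge1. Qed.

Lemma minors_gap_gt0 : 0 < minors_gap.
Proof. by rewrite mulr_gt0 ?minors_lb_gt0 ?minors_ub_gt0. Qed.

Lemma minors_gap_ge0 : 0 <= minors_gap.
Proof. exact/ltW/minors_gap_gt0. Qed.

Definition subspace_const : R := ((n.+1)%:R * minors_gap)^-1.

Lemma subspace_const_gt0 : 0 < subspace_const.
Proof. by rewrite invr_gt0 mulr_gt0 ?ltr0Sn ?minors_gap_gt0. Qed.

End Constants.

Section SingularValueBounds.
Variables (R : realType) (m n : nat) (M : 'M[R]_(m, n)) (Lam : nat -> R).
Hypothesis M_sv : singular_values M Lam.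

Lemma Lam_ge0 i : (i < n)%N -> 0 <= Lam i.
Proof. by case: M_sv => _ + _; apply. Qed.

Lemma Lam_le i j : (i <= j)%N -> (j < n)%N -> Lam j <= Lam i.
Proof. by case: M_sv => + _ _ ij jn; apply; rewrite ij jn. Qed.

Lemma prod_Lam_ge0 k : (k <= n)%N -> 0 <= \prod_(i < k) Lam i.
Proof. by move=> kn; apply: prodr_ge0 => i _; apply/Lam_ge0/(leq_trans (ltn_ord i)). Qed.

Lemma sum_principal_minors_Lam k : (k <= n)%N ->
  \sum_(T : {set 'I_n} | #|T| == k) \det (principal_mx T (M^T *m M)) =
  \sum_(T : {set 'I_n} | #|T| == k) \prod_(i in T) Lam i ^+ 2.
Proof.
by case: M_sv => _ _ charM kn; exact: (sum_principal_minors (c := fun i : 'I_n => Lam i ^+ 2)).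
Qed.

Lemma minors_supn_ub k : (k <= n)%N ->
  minors_supn k M <= minors_ub R n * \prod_(i < k) Lam i.
Proof.
move=> kn; have P0 := prod_Lam_ge0 kn.
apply: minors_supn_le => [|f g _ g_incr].
  by rewrite mulr_ge0 // ltW ?minors_ub_gt0.
apply: le_of_sqr_le_mul => //; first exact: minors_ub_ge1.
have g_inj := incr_sel_inj g_incr; set T := g @: [set: 'I_k].
have card_T : #|T| = k by rewrite card_imset // cardsT card_ord.
have gram_T := principal_minor_gram M g_inj; rewrite -/T in gram_T.
have Lam2_le (T' : {set 'I_n}) : #|T'| = k ->
    \prod_(i in T') Lam i ^+ 2 <= (\prod_(i < k) Lam i) ^+ 2.
  move=> <-; rewrite -prodrXl.
  apply: (prod_set_le_prefix (c := fun i => Lam i ^+ 2)) => [i|i j /andP [ij jn]].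
    exact: sqr_ge0.
  by rewrite ler_sqr ?nnegrE ?Lam_ge0 ?Lam_le //; apply: leq_ltn_trans jn.
rewrite real_normK ?num_real //.
apply: (@le_trans _ _ (k`!%:R * \det (principal_mx T (M^T *m M)))).
  rewrite gram_T; apply: (ler_term_sum (P := predT)
    (F := fun h : {ffun 'I_k -> 'I_m} => \det (mxsub h g M) ^+ 2)) => // h _.
  exact: sqr_ge0.
apply: (@le_trans _ _ (k`!%:R *
    \sum_(T' : {set 'I_n} | #|T'| == k) \det (principal_mx T' (M^T *m M)))).
  rewrite ler_wpM2l ?ler0n //; apply: (ler_term_sum (j := T)); last by rewrite card_T.
  by move=> *; apply: principal_minor_ge0.
rewrite sum_principal_minors_Lam //.
apply: (@le_trans _ _ (k`!%:R * ((\prod_(i < k) Lam i) ^+ 2 *+ #|{set 'I_n}|))).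
  rewrite ler_wpM2l ?ler0n // -sumr_const.
  apply: le_trans (sumr_pred_le (fun T' : {set 'I_n} => #|T'| == k) _) => [|_].
    by apply: ler_sum => T' /eqP; apply: Lam2_le.
  exact: sqr_ge0.
rewrite -[_ ^+ 2 *+ _]mulr_natr mulrCA mulrC ler_wpM2r ?sqr_ge0 // /minors_ub natrM.
by rewrite ler_wpM2r ?ler0n // ler_nat leq_fact.
Qed.

Lemma minors_supn_lb k : (k <= n)%N ->
  \prod_(i < k) Lam i <= minors_lb R m n * minors_supn k M.
Proof.
move=> kn; set D := minors_supn k M.
apply: le_of_sqr_le_mul; rewrite ?prod_Lam_ge0 ?minors_supn_ge0 ?minors_lb_ge1 //.
set T0 := [set i : 'I_n | (i < k)%N].
have minor_le (T : {set 'I_n}) : #|T| = k ->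
    \det (principal_mx T (M^T *m M)) <= D ^+ 2 *+ m ^ k.
  move=> card_T; have [g [g_inj T_img]] := set_enum_inj T.
  apply: (@le_trans _ _ (#|T|`!%:R * \det (principal_mx T (M^T *m M)))).
    by rewrite ler_peMl ?principal_minor_ge0 // ler1n fact_gt0.
  rewrite [X in principal_mx X]T_img principal_minor_gram // -card_T.
  have card_h : #|{ffun 'I_#|T| -> 'I_m}| = (m ^ #|T|)%N by rewrite card_ffun !card_ord.
  rewrite -card_h -sumr_const.
  apply: ler_sum => h _; rewrite -real_normK ?num_real // ler_sqr ?nnegrE ?minors_supn_ge0 //.
  by rewrite /D -card_T normr_det_mxsub_le.
apply: (@le_trans _ _ (\sum_(T : {set 'I_n} | #|T| == k) \prod_(i in T) Lam i ^+ 2)).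
  rewrite -prodrXl (big_ord_widen n (fun i => Lam i ^+ 2) kn).
  rewrite (eq_bigl (fun i => i \in T0)); last by move=> i; rewrite /T0 inE.
  apply: (ler_term_sum (P := fun T : {set 'I_n} => #|T| == k)); last by rewrite card_set_ltn.
  by move=> T _; apply: prodr_ge0 => i _; apply: sqr_ge0.
rewrite -sum_principal_minors_Lam //.
apply: (@le_trans _ _ (\sum_(T : {set 'I_n} | #|T| == k) D ^+ 2 *+ m ^ k)).
  by apply: ler_sum => T /eqP; apply: minor_le.
apply: (@le_trans _ _ (D ^+ 2 *+ m ^ k *+ #|{set 'I_n}|)).
  by rewrite -sumr_const sumr_pred_le // => _; rewrite mulrn_wge0 ?sqr_ge0.
rewrite -mulrnA -mulr_natr mulrC /minors_lb ler_wpM2r ?sqr_ge0 // ler_nat mulnC.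
rewrite leq_mul2l (@leq_trans (m.+1 ^ k)) ?orbT ?leq_pexp2l //.
by have [->|k_gt0] := posnP k; last rewrite leq_exp2r.
Qed.

Lemma minors_supn_gt0 k : (k <= n)%N -> (forall i, (i < k)%N -> 0 < Lam i) ->
  0 < minors_supn k M.
Proof.
move=> kn Lam_gt0.
have P_gt0 : 0 < \prod_(i < k) Lam i by apply: prodr_gt0 => i _; apply: Lam_gt0.
have := lt_le_trans P_gt0 (minors_supn_lb kn).
by rewrite pmulr_rgt0 // minors_lb_gt0.
Qed.

Lemma minors_supn_succ_le k : (k < n)%N ->
  minors_supn k.+1 M <= minors_gap R m n * Lam k * minors_supn k M.
Proof.
move=> kn; apply: le_trans (minors_supn_ub kn) _.
rewrite big_ord_recr /= [_ * Lam k]mulrC mulrA.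
have -> : minors_gap R m n * Lam k * minors_supn k M =
    minors_ub R n * Lam k * (minors_lb R m n * minors_supn k M).
  by rewrite /minors_gap; ring.
apply: ler_wpM2l; last exact: (minors_supn_lb (ltnW kn)).
by rewrite mulr_ge0 ?Lam_ge0 // ltW ?minors_ub_gt0.
Qed.

Lemma Lam_mul_minors_supn_le k : (k < n)%N ->
  Lam k * minors_supn k M <= minors_gap R m n * minors_supn k.+1 M.
Proof.
move=> kn; apply: (@le_trans _ _ (minors_ub R n * \prod_(i < k.+1) Lam i)).
  rewrite big_ord_recr /= mulrA [X in _ <= X]mulrC.
  by apply: ler_wpM2l; rewrite ?Lam_ge0 ?(minors_supn_ub (ltnW kn)).
rewrite /minors_gap [_ * minors_ub R n]mulrC -mulrA.
apply: ler_wpM2l; first exact/ltW/minors_ub_gt0.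
exact: minors_supn_lb.
Qed.

Lemma coord_subspace_bound k : (0 < k <= n)%N ->
  exists S : {set 'I_n}, #|S| = k /\
    forall v : 'cV[R]_n, (forall i, i \notin S -> v i 0 = 0) ->
      Lam k.-1 * mxsupn v <= k%:R * minors_gap R m n * mxsupn (M *m v).
Proof.
case: k => // k /= kn.
have RHS_ge0 (v : 'cV[R]_n) : 0 <= k.+1%:R * minors_gap R m n * mxsupn (M *m v).
  by rewrite !mulr_ge0 ?mxsupn_ge0 ?ler0n ?minors_gap_ge0.
have [Lk_le0 | Lk_gt0] := lerP (Lam k) 0.
  exists [set i : 'I_n | (i < k.+1)%N]; split; first exact: card_set_ltn.
  by move=> v _; apply: le_trans _ (RHS_ge0 v); rewrite mulr_le0_ge0 ?mxsupn_ge0.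
have Lam_gt0 i : (i <= k)%N -> 0 < Lam i.
  by move=> ik; apply: lt_le_trans Lk_gt0 (Lam_le ik kn).
have Dk_gt0 := minors_supn_gt0 (ltnW kn) (fun i ik => Lam_gt0 i (ltnW ik)).
have [f [g [_ g_incr eD]]] := minors_supn_attained (minors_supn_gt0 kn Lam_gt0).
exists (g @: [set: 'I_k.+1]); split.
  by rewrite card_imset ?cardsT ?card_ord //; apply: incr_sel_inj.
move=> v v_supp; set D' := minors_supn k.+1 M; set D := minors_supn k M.
have cramer : D' * mxsupn v <= k.+1%:R * D * mxsupn (M *m v).
  by rewrite /D' eD; apply: cramer_bound => //; apply: incr_sel_inj.
rewrite -(ler_pM2r Dk_gt0).
apply: (@le_trans _ _ (minors_gap R m n * (D' * mxsupn v))).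
  rewrite mulrAC mulrA; apply: ler_wpM2r; first exact: mxsupn_ge0.
  exact: Lam_mul_minors_supn_le.
have -> : k.+1%:R * minors_gap R m n * mxsupn (M *m v) * D =
    minors_gap R m n * (k.+1%:R * D * mxsupn (M *m v)) by ring.
by apply: ler_wpM2l; first exact: minors_gap_ge0.
Qed.

Lemma small_singular_subspace j r : (j < n)%N -> (forall i, (i < j)%N -> 0 < Lam i) ->
  (r <= n - j)%N ->
  exists X : 'M[R]_n, \rank X = r /\
    forall v : 'cV[R]_n, (v^T <= X)%MS ->
      mxsupn (M *m v) <= n%:R * minors_gap R m n * Lam j * mxsupn v.
Proof.
move=> jn Lam_gt0 r_le.
have Dj_gt0 := minors_supn_gt0 (ltnW jn) Lam_gt0.
have [f [g [_ _ eD]]] := minors_supn_attained Dj_gt0.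
set K := kermx (rowsub f M)^T.
have rK : (r <= \rank K)%N.
  by rewrite mxrank_ker mxrank_tr (leq_trans r_le) // leq_sub2l // rank_leq_row.
have [X [rX XK]] := submx_of_rank rK; exists X; split => // v vX.
have Mv_f0 i : (M *m v) (f i) 0 = 0.
  have := submx_trans vX XK; rewrite sub_kermx -trmx_mul => /eqP /matrixP /(_ 0 i).
  by rewrite !mxE => Mv0; rewrite -[RHS]Mv0; apply: eq_bigr => c _; rewrite !mxE.
apply: mxsupn_le => [|r0 z].
  by rewrite !mulr_ge0 ?ler0n ?mxsupn_ge0 ?Lam_ge0 ?minors_gap_ge0.
rewrite (ord1 z) -(ler_pM2l Dj_gt0) {1}eD -normrM det_border_expansion //.
apply: le_trans (ler_norm_sum _ _ _) _.
have -> : minors_supn j M * (n%:R * minors_gap R m n * Lam j * mxsupn v) =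
    \sum_(c < n) mxsupn v * (minors_gap R m n * Lam j * minors_supn j M).
  by rewrite sumr_const card_ord -mulr_natl; ring.
apply: ler_sum => c _; rewrite normrM ler_pM ?normr_ge0 ?normr_le_mxsupn //.
exact: le_trans (normr_det_mxsub_le _ _ _) (minors_supn_succ_le jn).
Qed.

Lemma coord_subspace_lb k : (0 < k <= n)%N ->
  exists S : {set 'I_n}, #|S| = k /\
    forall v : 'cV[R]_n, (forall i, i \notin S -> v i 0 = 0) ->
      subspace_const R m n * mxsupn v * Lam k.-1 <= mxsupn (M *m v).
Proof.
move=> k_range; have /andP [_ kn] := k_range.
have [S [card_S S_bound]] := coord_subspace_bound k_range.
exists S; split => // v v_supp.
rewrite /subspace_const -mulrA mulrC ler_pdivrMr; last first.
  by rewrite mulr_gt0 ?ltr0Sn ?minors_gap_gt0.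
rewrite mulrC; apply: le_trans (S_bound v v_supp) _.
rewrite [X in _ <= X]mulrC ler_wpM2r ?mxsupn_ge0 // ler_wpM2r ?minors_gap_ge0 //.
by rewrite ler_nat leqW.
Qed.

Lemma kernel_or_coord_subspace k C : (0 < k <= n)%N -> 1 <= C ->
  (exists X : 'M[R]_n, \rank X = (n - k + 1)%N /\
     forall v : 'cV[R]_n, (v^T <= X)%MS -> mxsupn (M *m v) <= C^-1 * mxsupn v)
  \/
  (exists S : {set 'I_n}, #|S| = k /\
     forall v : 'cV[R]_n, (forall i, i \notin S -> v i 0 = 0) ->
       subspace_const R m n ^+ 2 * C^-1 * mxsupn v <= mxsupn (M *m v)).
Proof.
move=> k_range C1; have C_gt0 : 0 < C by apply: lt_le_trans C1.
set c := subspace_const R m n; have c_gt0 : 0 < c := subspace_const_gt0 R m n.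
set th := c / C; have th_gt0 : 0 < th by rewrite divr_gt0.
have [th_le | Lam_lt] := lerP th (Lam k.-1).
  right; have [S [card_S S_lb]] := coord_subspace_lb k_range.
  exists S; split => // v v_supp; apply: le_trans (S_lb v v_supp).
  have -> : c ^+ 2 * C^-1 * mxsupn v = c * mxsupn v * th by rewrite /th; ring.
  by rewrite ler_wpM2l // mulr_ge0 ?mxsupn_ge0 ?(ltW c_gt0).
left; move: k_range => /andP [k_gt0 kn].
(* [j] is the first small singular value, so the [j x j] minors do not all vanish. *)
have [j Lj_lt j_min] := ex_minnP (ex_intro (fun j => Lam j < th) _ Lam_lt).
have jk : (j <= k.-1)%N by apply: j_min.
have Lam_gt0 i : (i < j)%N -> 0 < Lam i.
  by move=> ij; apply: lt_le_trans th_gt0 _; rewrite leNgt; apply/negP => /j_min; lia.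
have jn : (j < n)%N by lia.
have r_le : (n - k + 1 <= n - j)%N by lia.
have [X [rX X_ub]] := small_singular_subspace jn Lam_gt0 r_le.
exists X; split => // v vX; apply: le_trans (X_ub v vX) _.
rewrite ler_wpM2r ?mxsupn_ge0 //.
have N_gt0 : 0 < (n.+1)%:R * minors_gap R m n by rewrite mulr_gt0 ?ltr0Sn ?minors_gap_gt0.
have -> : C^-1 = (n.+1)%:R * minors_gap R m n * th.
  by rewrite /th /c /subspace_const mulrA mulfV ?mul1r // gt_eqF.
rewrite ler_pM ?mulr_ge0 ?ler0n ?Lam_ge0 ?minors_gap_ge0 //; last exact: ltW.
by rewrite ler_wpM2r ?minors_gap_ge0 // ler_nat.
Qed.

End SingularValueBounds.

Theorem lemma3p2 (R : realType) (m n : nat) :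
  exists (a A a' a'' : R), [/\ 0 < a, 0 < A, 0 < a', 0 < a'' &
  forall (M : 'M[R]_(m, n)) (Lam : nat -> R) (k : nat),
    (0 < k)%N -> (k <= minn m n)%N -> singular_values M Lam ->
    [/\ (* (i) *)
        a * \prod_(i < k) Lam i <= minors_supn k M
        /\ minors_supn k M <= A * \prod_(i < k) Lam i,
        (* (ii) *)
        exists S : {set 'I_n}, #|S| = k /\
          forall v : 'cV[R]_n, (forall i, i \notin S -> v i 0 = 0) ->
            a' * mxsupn v * Lam k.-1 <= mxsupn (M *m v) &
        (* (iii) *)
        forall C : R, 1 <= C ->
          (exists X : 'M[R]_n, \rank X = (n - k + 1)%N /\
             forall v : 'cV[R]_n, (v^T <= X)%MS ->
               mxsupn (M *m v) <= C^-1 * mxsupn v)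
          \/
          (exists S : {set 'I_n}, #|S| = k /\
             forall v : 'cV[R]_n, (forall i, i \notin S -> v i 0 = 0) ->
               a'' * C^-1 * mxsupn v <= mxsupn (M *m v))]].
Proof.
exists (minors_lb R m n)^-1, (minors_ub R n), (subspace_const R m n),
  (subspace_const R m n ^+ 2).
split=> [||||M Lam k k_gt0].
- by rewrite invr_gt0 minors_lb_gt0.
- exact: minors_ub_gt0.
- exact: subspace_const_gt0.
- by rewrite exprn_gt0 ?subspace_const_gt0.
rewrite leq_min => /andP [_ kn] M_sv.
have k_range : (0 < k <= n)%N by rewrite k_gt0.
split.
- by rewrite ler_pdivrMl ?minors_lb_gt0 ?(minors_supn_lb M_sv) ?(minors_supn_ub M_sv).
- exact (coord_subspace_lb M_sv k_range).
- move=> C C1; exact (kernel_or_coord_subspace M_sv k_range C1).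
Qed.
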